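(* Let $n>2$ and $G_n=BS(1,n)=\langle a,b\mid bab^{-1}=a^n\rangle$. Then for every $k>0$, $G_n$ is not $k$-chordal with respect to the generating set $\{a,b\}$.
   Context: For a group $G$ with finite generating set $S$, $S^{\pm1}=S\cup S^{-1}\setminus\{e\}$. A relation $s_1\cdots s_n=e$ with $n>2$, $s_i\in S^{\pm1}$, is simple if $s_p\cdots s_q=e$ holds exactly when $(p,q)=(1,n)$. $G$ is $k$-chordal with respect to $S$ if for every simple relation $s_1\cdots s_n=e$ with $n\ge k$ there exist $1\le i<j\le n$ and $s'_1,\dots,s'_r\in S^{\pm1}$ with $s_i\cdots s_j=s'_1\cdots s'_r$ and $r\le\min\{j-i,\,n-j+i-2\}$ (equivalently, every cycle of length at least $k$ in $Cay(G,S)$ has a shortcut). *)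

From mathcomp Require Import all_boot all_algebra.
Set Implicit Arguments. Unset Strict Implicit. Unset Printing Implicit Defensive.
Import GRing.Theory Num.Theory.

(* Model of BS(1,n) = <a,b | b a b^-1 = a^n> (n >= 2) as the group of affine
   maps x |-> n^e * x + t of the rationals, encoded as pairs (e, t) : int * rat.
   Group product is composition: (g * h)(x) = g (h x).
   a : x |-> x + 1,   b : x |-> n x.   Then b a b^-1 = a^n.
   For n >= 2 this is a faithful representation of BS(1,n). *)

Definition bs_mul (n : nat) (g h : int * rat) : int * rat :=
  ((g.1 + h.1)%R, ((n%:R : rat) ^ g.1 * h.2 + g.2)%R).

Definition bs_one : int * rat := (0%R, 0%R).

Inductive gen := Ga | Gainv | Gb | Gbinv.

Definition gen_val (s : gen) : int * rat :=
  match s with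
  | Ga => (0%R, 1%R)
  | Gainv => (0%R, (-1)%R)
  | Gb => (1%R, 0%R)
  | Gbinv => ((-1)%R, 0%R)
  end.

Definition word_val (n : nat) (w : seq gen) : int * rat :=
  foldr (fun s g => bs_mul n (gen_val s) g) bs_one w.

(* subword s_{p+1} ... s_{q+1} (0-indexed positions p..q) *)
Definition subword (w : seq gen) (p q : nat) : seq gen := drop p (take q.+1 w).

Definition simple_relation (n : nat) (w : seq gen) : Prop :=
  2 < size w /\
  forall p q : nat, p <= q -> q < size w ->
    (word_val n (subword w p q) = bs_one <-> (p = 0 /\ q = (size w).-1)).

(* k-chordal w.r.t. {a, b}; positions are 0-indexed, so i,j here correspond to
   i+1, j+1 in the paper; the bound r <= n - j + i - 2 is written as
   r + 2 + j <= N + i to avoid truncated subtraction. *)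
Definition k_chordal (n k : nat) : Prop :=
  forall w : seq gen, simple_relation n w -> k <= size w ->
    exists (i j : nat) (w' : seq gen),
      [/\ i < j, j < size w,
          word_val n (subword w i j) = word_val n w',
          size w' <= j - i &
          size w' + 2 + j <= size w + i].

From mathcomp Require Import all_boot all_order all_algebra zify ring.
Import Order.TTheory GRing.Theory Num.Theory.

(* For m >= 2 the word b^m a b^-m a b^m a^-1 b^-m a^-1, the commutator of
   b^m a b^-m = a^(n^m) with a, is a relation of length 4m+4 whose cycle in the
   Cayley graph is isometric: any two of its vertices are as far apart in BS(1,n) as along the
   cycle.  Such a cycle is simple and has no shortcut, and m is arbitrary.

   Distances are bounded by reading a word, from a vertex x |-> n^h x + t, as a
   walk: b^{+-1} moves the height h by +-1 and a^{+-1} at height e moves the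
   shift t by +-n^e.  A walk of maximal height p using A letters a^{+-1} moves
   the shift by at most A n^p, and only its letters a^{+-1} at height <= 0 can
   move it by a non-multiple of n.  As n >= 3 gives n^j > 2j, moving the shift
   by n^m (resp. n^m +- 1) costs at least 2m+1 (resp. 2m+2) letters, climb
   included, which is what the arcs of the cycle cost. *)

Set Implicit Arguments.
Unset Strict Implicit.
Unset Printing Implicit Defensive.

Lemma ltn_double_expl n j : 2 < n -> j.*2 < n ^ j.
Proof. by move=> n_gt2; elim: j => [|j IH]; rewrite ?expnS //; nia. Qed.

Lemma expn_le_mul_cost n m p A :
  2 < n -> n ^ m <= A * n ^ p -> 2 * m + 1 <= A + 2 * p.
Proof.
move=> n_gt2 le_nm; have n_gt0 : 0 < n by lia.
have [le_mp | lt_pm] := leqP m p.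
  by case: A le_nm => [|A]; rewrite ?mul0n ?leqn0 ?expn_eq0; lia.
move: le_nm; rewrite -(subnK (ltnW lt_pm)) expnD leq_pmul2r ?expn_gt0 ?n_gt0 //.
by have := ltn_double_expl (m - p) n_gt2; lia.
Qed.

Lemma expn_lt_mul_cost n m p A :
  2 < n -> n ^ m < A * n ^ p -> 2 * m + 2 <= A + 2 * p.
Proof.
move=> n_gt2 lt_nm; have n_gt0 : 0 < n by lia.
have [lt_mp | le_pm] := ltnP m p; first by lia.
move: lt_nm; rewrite -(subnK le_pm) expnD ltn_pmul2r ?expn_gt0 ?n_gt0 //.
by have := ltn_double_expl (m - p) n_gt2; lia.
Qed.

Lemma expn_pred_cost n m p A0 A1 : 2 < n -> 1 < m -> 0 < A0 ->
  n ^ m - 1 <= A0 + A1 * n ^ p -> 2 * m + 2 <= A0 + A1 + 2 * p.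
Proof.
move=> n_gt2 m_gt1 A0_gt0 le_nm.
case: p le_nm => [|p] le_nm.
  case: m m_gt1 le_nm => [|j] // j_gt0; rewrite expn0 muln1 expnS.
  by have := ltn_double_expl j n_gt2; rewrite -mul2n; nia.
apply: (@expn_lt_mul_cost n m p.+1) => //.
have : n <= n ^ p.+1 by rewrite -{1}(expn1 n) leq_pexp2l //; lia.
by nia.
Qed.

Lemma take_add_cat (T : Type) (u v : seq T) j r : size u = j ->
  take (j + r) (u ++ v) = u ++ take r v.
Proof. by move=> <-; rewrite takeD take_size_cat // drop_size_cat. Qed.

Lemma take_nseq_cat (T : Type) j (x : T) v r : r <= j ->
  take r (nseq j x ++ v) = nseq r x.
Proof. by move=> le_rj; rewrite takel_cat ?size_nseq // take_nseq. Qed.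

Local Open Scope ring_scope.

Definition a_sign (s : gen) : int :=
  match s with Ga => 1 | Gainv => -1 | _ => 0 end.

Definition b_sign (s : gen) : int :=
  match s with Gb => 1 | Gbinv => -1 | _ => 0 end.

Definition is_a (s : gen) : bool := a_sign s != 0.

Fixpoint walk_height (h : int) (w : seq gen) : int :=
  if w is s :: w' then walk_height (h + b_sign s) w' else h.

Fixpoint max_height (h : int) (w : seq gen) : int :=
  if w is s :: w' then Num.max h (max_height (h + b_sign s) w') else h.

Fixpoint min_height (h : int) (w : seq gen) : int :=
  if w is s :: w' then Num.min h (min_height (h + b_sign s) w') else h.

Fixpoint count_a_at (P : pred int) (h : int) (w : seq gen) : nat :=
  if w is s :: w' then (is_a s && P h) + count_a_at P (h + b_sign s) w' else 0.

Local Notation nonpos := (fun x : int => x <= 0).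

Lemma walk_height_cat h u v : walk_height h (u ++ v) = walk_height (walk_height h u) v.
Proof. by elim: u h => //= s u IH h. Qed.

Lemma walk_height_nseq_b h j : walk_height h (nseq j Gb) = h + j%:Z.
Proof. by elim: j h => [|j IH] h /=; rewrite ?IH; lia. Qed.

Lemma walk_height_nseq_binv h j : walk_height h (nseq j Gbinv) = h - j%:Z.
Proof. by elim: j h => [|j IH] h /=; rewrite ?IH; lia. Qed.

Lemma walk_height_range h w :
  min_height h w <= h <= max_height h w /\
  min_height h w <= walk_height h w <= max_height h w.
Proof. by elim: w h => [|s w IH] h /=; [lia | have := IH (h + b_sign s); lia]. Qed.

Lemma size_walk_height h w : `|h - walk_height h w| <= (size w)%:Z.
Proof.
by elim: w h => [|s w IH] h /=; [lia | have := IH (h + b_sign s); case: s => /=; lia].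
Qed.

(* The walk runs through [min, max] twice, up to its net displacement, and
   only letters b^{+-1} change the height. *)
Lemma size_walk_span h w :
  (count is_a w)%:Z + 2 * (max_height h w - min_height h w) <=
    (size w)%:Z + `|h - walk_height h w|.
Proof.
elim: w h => [|s w IH] h /=; first by lia.
have := walk_height_range (h + b_sign s) w.
by have := IH (h + b_sign s); case: s => /=; lia.
Qed.

Lemma count_a_at_predC P h w :
  (count_a_at P h w + count_a_at (predC P) h w)%N = count is_a w.
Proof.
elim: w h => [|s w IH] h //=; rewrite -(IH (h + b_sign s)).
by case: (is_a s); case: (P h) => /=; lia.
Qed.

Lemma count_a_at_nonpos h w : count_a_at nonpos h w != 0%N -> min_height h w <= 0.
Proof.
elim: w h => [|s w IH] h //= hpos.
by case: (boolP (is_a s && (h <= 0))) hpos => [/andP[_ h0] | _ /IH]; lia.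
Qed.

Lemma norm_a_sign s : `|(a_sign s)%:~R : rat| = (is_a s)%:R.
Proof. by case: s; rewrite /= ?normrN ?normr1 ?normr0. Qed.

Section Shift.

Variable n : nat.

Fixpoint walk_shift (h : int) (w : seq gen) : rat :=
  if w is s :: w' then (a_sign s)%:~R * n%:R ^ h + walk_shift (h + b_sign s) w'
  else 0.

Lemma walk_shift_cat h u v :
  walk_shift h (u ++ v) = walk_shift h u + walk_shift (walk_height h u) v.
Proof. by elim: u h => /= [|s u IH] h; rewrite ?add0r // IH addrA. Qed.

Lemma walk_shift_nseq h j s : ~~ is_a s -> walk_shift h (nseq j s) = 0.
Proof. by case: s => // _; elim: j h => [|j IH] h //=; rewrite IH addr0 mul0r. Qed.

Hypothesis n_gt0 : (0 < n)%N.

Lemma bs_mul_word_val h c w :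
  bs_mul n (h, c) (word_val n w) = (walk_height h w, c + walk_shift h w).
Proof.
have n_neq0 : (n%:R : rat) != 0 by rewrite pnatr_eq0 -lt0n.
elim: w h c => [|s w IH] h c /=.
  by rewrite /bs_mul /= addr0 mulr0 !add0r addr0.
rewrite addrA -IH; case: (word_val n w) => e t; rewrite /bs_mul /=.
congr (_, _); first by case: s => /=; rewrite addrA.
by rewrite expfzDr //; case: s => /=; rewrite ?expr0z ?expr1z; ring.
Qed.

Lemma word_val_walk w : word_val n w = (walk_height 0 w, walk_shift 0 w).
Proof.
rewrite -[walk_shift 0 w]add0r -bs_mul_word_val.
by case: (word_val n w) => e t; rewrite /bs_mul /= add0r expr0z mul1r addr0.
Qed.

Lemma word_val_cat u v : word_val n (u ++ v) = bs_mul n (word_val n u) (word_val n v).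
Proof.
rewrite [word_val n u]word_val_walk bs_mul_word_val word_val_walk.
by rewrite walk_height_cat walk_shift_cat.
Qed.

Lemma norm_expr_nonpos h : h <= 0 -> `|(n%:R : rat) ^ h| <= 1.
Proof.
move=> h_le0; rewrite ger0_norm ?exprz_ge0 // -(expr0z (n%:R : rat)).
by apply: ler_weXz2l; rewrite // ler1n.
Qed.

(* A letter a^{+-1} at height k+1 > 0 shifts by n * (+-n^k). *)
Lemma walk_shift_split h (p : nat) w : max_height h w <= p ->
  exists z : int,
    `|walk_shift h w - n%:R * z%:~R| <= (count_a_at nonpos h w)%:R /\
    `|(n%:R : rat) * z%:~R| <= (count_a_at (predC nonpos) h w * n ^ p)%:R.
Proof.
elim: w h => [|s w IH] h /= hp.
  by exists 0; rewrite mulr0 subr0 normr0 mul0n.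
have [h_le_p tail_le_p] : h <= p /\ max_height (h + b_sign s) w <= p by lia.
have [z [z_low z_high]] := IH _ tail_le_p.
set c := (a_sign s)%:~R * n%:R ^ h.
have [h_le0 | h_gt0] := lerP h 0.
  exists z; rewrite andbT andbF add0n; split => //.
  rewrite -addrA natrD; apply: (le_trans (ler_normD _ _)); apply: lerD => //.
  rewrite normrM norm_a_sign -[X in _ <= X]mulr1.
  by apply: ler_wpM2l; [exact: ler0n | exact: norm_expr_nonpos].
have [k hk] : exists k : nat, h = k.+1 by exists `|h - 1|%N; lia.
set y := a_sign s * (n ^ k)%:Z.
have c_eq : c = n%:R * y%:~R by rewrite /c hk -exprnP exprS intrM -natrX; ring.
exists (z + y); rewrite andbF andbT add0n intrD mulrDr -c_eq; split.
  by rewrite (addrC (n%:R * _)) opprD addrACA subrr add0r.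
rewrite mulnDl natrD addrC; apply: (le_trans (ler_normD _ _)); apply: lerD => //.
rewrite normrM norm_a_sign natrM ler_wpM2l //.
by rewrite hk -exprnP -natrX normr_nat ler_nat leq_pexp2l //; lia.
Qed.

Lemma norm_walk_shift_le h (p : nat) w : max_height h w <= p ->
  `|walk_shift h w| <=
    (count_a_at nonpos h w + count_a_at (predC nonpos) h w * n ^ p)%:R.
Proof.
case/walk_shift_split => z [z_low z_high].
rewrite -(subrK (n%:R * z%:~R) (walk_shift h w)) natrD.
by apply: (le_trans (ler_normD _ _)); apply: lerD.
Qed.

Lemma walk_shift_dvdn h w (K : nat) : `|walk_shift h w| = K%:R ->
  count_a_at nonpos h w = 0%N -> (n %| K)%N.
Proof.
move=> norm_K no_low.
have [|z [z_low _]] := walk_shift_split (p := `|max_height h w|%N) (h := h) (w := w).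
  by have := walk_height_range h w; lia.
move: z_low; rewrite no_low normr_le0 subr_eq0 => /eqP shift_eq.
move: norm_K; rewrite shift_eq -[n%:R]/(n%:Z%:~R) -intrM -intr_norm -natr_absz.
by move/eqP; rewrite eqr_nat => /eqP <-; rewrite abszM dvdn_mulr.
Qed.

End Shift.

Section WalkLength.

Variables (n : nat) (n_gt2 : (2 < n)%N) (h1 h2 : nat) (w : seq gen) (d : int).
Hypotheses (walk_h : walk_height h1 w = h2) (walk_s : walk_shift n h1 w = d%:~R).

Let n_gt0 : (0 < n)%N. Proof. exact: ltn_trans n_gt2. Qed.

Let norm_shift : `|walk_shift n h1 w| = (`|d|%N)%:R.
Proof. by rewrite walk_s natr_absz intr_norm. Qed.

Let low_letter : ~~ (n %| `|d|)%N -> count_a_at nonpos h1 w != 0%N.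
Proof. by apply: contra => /eqP; apply: walk_shift_dvdn norm_shift. Qed.

Let norm_shift_le : (`|d| <= count_a_at nonpos h1 w +
  count_a_at (predC nonpos) h1 w * n ^ `|max_height h1 w|)%N.
Proof.
rewrite -(ler_nat rat) -norm_shift; apply: norm_walk_shift_le => //.
by have := walk_height_range h1 w; lia.
Qed.

Lemma walk_length_unit : `|d|%N = 1%N -> (h1 + h2 + 1 <= size w)%N.
Proof.
move=> d1; have low : count_a_at nonpos h1 w != 0%N.
  by apply: low_letter; rewrite d1 dvdn1; lia.
have := count_a_at_predC nonpos h1 w; have := count_a_at_nonpos low.
by have := size_walk_span h1 w; have := walk_height_range h1 w; lia.
Qed.

Lemma walk_length_expn m : `|d|%N = (n ^ m)%N -> (2 * m + 1 <= size w + h1 + h2)%N.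
Proof.
move=> dm; have : (n ^ m <= count is_a w * n ^ `|max_height h1 w|)%N.
  have : (0 < n ^ `|max_height h1 w|)%N by rewrite expn_gt0 n_gt0.
  by have := norm_shift_le; rewrite -(count_a_at_predC nonpos h1 w) dm; nia.
move/(expn_le_mul_cost n_gt2).
by have := size_walk_span h1 w; have := walk_height_range h1 w; lia.
Qed.

Lemma walk_length_expn_pm1 m : (1 < m)%N ->
  `|d|%N = (n ^ m).+1 \/ `|d|%N = (n ^ m).-1 ->
  (2 * m + 2 <= size w + `|h1 - h2|)%N.
Proof.
move=> m_gt1 dm.
have dvd_nm : (n %| n ^ m)%N by rewrite dvdn_exp // ltnW.
have nm_gt0 : (0 < n ^ m)%N by rewrite expn_gt0 n_gt0.
have low : count_a_at nonpos h1 w != 0%N.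
  apply: low_letter; case: dm => ->.
    by rewrite -addn1 dvdn_addr // dvdn1; lia.
  by rewrite -subn1 dvdn_subr // dvdn1; lia.
have := count_a_at_nonpos low; have := count_a_at_predC nonpos h1 w.
have : (n ^ m - 1 <= count_a_at nonpos h1 w +
    count_a_at (predC nonpos) h1 w * n ^ `|max_height h1 w|)%N.
  by have := norm_shift_le; case: dm => ->; lia.
move/(expn_pred_cost n_gt2 m_gt1).
by have := size_walk_span h1 w; have := walk_height_range h1 w; lia.
Qed.

End WalkLength.

(* Vertices i and j+1 of the cycle w are at least as far apart in the Cayley
   graph as along the cycle. *)
Definition isometric_cycle (n : nat) (w : seq gen) : Prop :=
  forall (i j : nat) (w' : seq gen), (i <= j < size w)%N ->
    word_val n (subword w i j) = word_val n w' ->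
    (minn (j.+1 - i) (size w - (j.+1 - i)) <= size w')%N.

Lemma isometric_cycle_simple n w : (2 < size w)%N -> word_val n w = bs_one ->
  isometric_cycle n w -> simple_relation n w.
Proof.
move=> size_w rel_w iso_w; split => // p q le_pq lt_q; split.
  by move=> triv; have /= := iso_w p q [::] ltac:(lia) triv; lia.
by case=> -> ->; rewrite /subword drop0 prednK ?take_size //; lia.
Qed.

Lemma isometric_cycle_not_chordal n k w : simple_relation n w -> (k <= size w)%N ->
  isometric_cycle n w -> ~ k_chordal n k.
Proof.
move=> simple_w le_k iso_w /(_ w simple_w le_k) [i [j [w' [lt_ij lt_j eq_w' short1 short2]]]].
by have := iso_w i j w' ltac:(lia) eq_w'; lia.
Qed.

Section Cycle.

Variables (n m : nat).

Definition bs_cycle : seq gen :=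
  nseq m Gb ++ Ga :: nseq m Gbinv ++ Ga :: nseq m Gb ++ Gainv :: nseq m Gbinv ++ [:: Gainv].

Lemma size_bs_cycle : size bs_cycle = (m.+1 * 4)%N.
Proof. by rewrite /bs_cycle; do 4!rewrite size_cat size_nseq /=; lia. Qed.

(* cycle_vertex k h t: the prefix of length k of bs_cycle evaluates to the map
   x |-> n^h x + t. *)
Inductive cycle_vertex : nat -> nat -> nat -> Prop :=
| VertexUp1 r of (r <= m)%N : cycle_vertex r r 0
| VertexDown1 r of (r <= m)%N : cycle_vertex (m.+1 + r) (m - r) (n ^ m)
| VertexUp2 r of (r <= m)%N : cycle_vertex (m.+1 * 2 + r) r (n ^ m).+1
| VertexDown2 r of (r <= m)%N : cycle_vertex (m.+1 * 3 + r) (m - r) 1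
| VertexLast : cycle_vertex (m.+1 * 4) 0 0.

Lemma cycle_vertexP k : (k <= m.+1 * 4)%N -> exists h t, cycle_vertex k h t.
Proof.
move=> le_k.
have [le1 | lt1] := leqP k m; first by do 2!eexists; apply: VertexUp1.
have [le2 | lt2] := leqP k (m.+1 + m).
  have -> : k = (m.+1 + (k - m.+1))%N by lia.
  by do 2!eexists; apply: VertexDown1; lia.
have [le3 | lt3] := leqP k (m.+1 * 2 + m).
  have -> : k = (m.+1 * 2 + (k - m.+1 * 2))%N by lia.
  by do 2!eexists; apply: VertexUp2; lia.
have [le4 | lt4] := leqP k (m.+1 * 3 + m).
  have -> : k = (m.+1 * 3 + (k - m.+1 * 3))%N by lia.
  by do 2!eexists; apply: VertexDown2; lia.
have -> : k = (m.+1 * 4)%N by lia.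
by do 2!eexists; apply: VertexLast.
Qed.

Lemma take_side_cat (x y : gen) v r :
  take (m.+1 + r) (nseq m x ++ y :: v) = nseq m x ++ y :: take r v.
Proof. by rewrite -cat1s catA take_add_cat ?size_cat ?size_nseq ?addn1 // -catA. Qed.

Lemma walk_take_cycle k h t : cycle_vertex k h t ->
  walk_height 0 (take k bs_cycle) = h /\ walk_shift n 0 (take k bs_cycle) = t%:R.
Proof.
case=> [r le_rm | r le_rm | r le_rm | r le_rm |];
  [ rewrite take_nseq_cat //
  | rewrite take_side_cat take_nseq_cat //
  | rewrite !mulnS muln0 addn0 -addnA !take_side_cat take_nseq_cat //
  | rewrite !mulnS muln0 addn0 -!addnA !take_side_cat take_nseq_cat //
  | rewrite -size_bs_cycle take_size ].
all: do 4!rewrite ?(walk_height_cat, walk_shift_cat, walk_height_nseq_b,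
                   walk_height_nseq_binv, walk_shift_nseq) //=.
all: split; first by lia.
all: by rewrite ?(add0r, addr0, subrr, expr0z) -?exprnP -?natrX -?natr1; ring.
Qed.

Lemma word_val_take_cycle k h t : (0 < n)%N -> cycle_vertex k h t ->
  word_val n (take k bs_cycle) = (h%:Z, t%:R).
Proof. by move=> n_gt0 /walk_take_cycle[wh ws]; rewrite word_val_walk // wh ws. Qed.

Lemma word_val_bs_cycle : (0 < n)%N -> word_val n bs_cycle = bs_one.
Proof.
move=> n_gt0; rewrite -(take_size bs_cycle) size_bs_cycle.
exact: word_val_take_cycle VertexLast.
Qed.

(* In each case the shift from vertex p to vertex q is 0, +-1, +-n^m or
   +-(n^m +- 1), and the matching lower bound on walk lengths applies. *)
Lemma cycle_vertex_dist p q hp hq tp tq w : (2 < n)%N -> (1 < m)%N -> (p < q)%N ->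
  cycle_vertex p hp tp -> cycle_vertex q hq tq ->
  walk_height hp w = hq -> walk_shift n hp w = (tq%:Z - tp%:Z)%:~R ->
  (minn (q - p) (m.+1 * 4 - (q - p)) <= size w)%N.
Proof.
move=> n_gt2 m_gt1 lt_pq Vp Vq wh ws.
have nm_gt0 : (0 < n ^ m)%N by rewrite expn_gt0 (ltn_trans _ n_gt2).
have := size_walk_height hp w; rewrite wh.
case: Vp lt_pq wh ws => [rp le_rp | rp le_rp | rp le_rp | rp le_rp |];
  case: Vq => [rq le_rq | rq le_rq | rq le_rq | rq le_rq |] lt_pq wh ws height_bound.
all: first
  [ lia
  | have := walk_length_unit n_gt2 wh ws ltac:(lia); lia
  | have := walk_length_expn n_gt2 wh ws (m := m) ltac:(lia); lia
  | have := walk_length_expn_pm1 n_gt2 wh ws m_gt1 ltac:(lia); lia ].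
Qed.

Lemma isometric_bs_cycle : (2 < n)%N -> (1 < m)%N -> isometric_cycle n bs_cycle.
Proof.
move=> n_gt2 m_gt1 i j w'; rewrite size_bs_cycle => /andP[le_ij lt_j] eq_w'.
have n_gt0 : (0 < n)%N by apply: ltn_trans n_gt2.
have [hi [ti Vi]] := cycle_vertexP (ltnW (leq_ltn_trans le_ij lt_j)).
have [hj [tj Vj]] := cycle_vertexP lt_j.
have prefix : take j.+1 bs_cycle = take i bs_cycle ++ subword bs_cycle i j.
  by rewrite /subword -{1}(cat_take_drop i (take j.+1 _)) take_takel // ltnW.
have := word_val_take_cycle n_gt0 Vj.
rewrite prefix word_val_cat // eq_w' (word_val_take_cycle n_gt0 Vi) bs_mul_word_val //.
case=> wh ws; apply: (cycle_vertex_dist n_gt2 m_gt1 _ Vi Vj wh) => //.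
by rewrite -[walk_shift _ _ _](addKr ti%:R) ws intrB addrC.
Qed.

End Cycle.

Local Close Scope ring_scope.

Theorem theorem13 (n : nat) (hn : 2 < n) (k : nat) (hk : 0 < k) :
  ~ k_chordal n k.
Proof.
have m_gt1 : 1 < k.+1 by [].
have iso := isometric_bs_cycle hn m_gt1.
apply: (isometric_cycle_not_chordal _ _ iso); last by rewrite size_bs_cycle; lia.
apply: isometric_cycle_simple iso; first by rewrite size_bs_cycle.
by apply: word_val_bs_cycle; apply: ltn_trans hn.
Qed.
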